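(* Let $F$ be WORDER or WMAJORITY. During a run of (1+1) GP-single on MO-$F$, let $s$ be the number of leaves of the current tree and $k$ the number of expressed variables of the current tree. Then $F$ of the current tree never decreases and the quantity $s-k$ never increases from one iteration to the next. In particular, once the current tree is non-redundant, it stays non-redundant for the rest of the run.
   Context: Fix an integer $n\ge 1$ and real weights $w_1\ge w_2\ge\dots\ge w_n>0$. The terminal set is $T=\{x_1,\bar x_1,\dots,x_n,\bar x_n\}$ ($\bar x_i$ is the complement of $x_i$; $x_i$ is called positive). A syntax tree is either the empty tree or a rooted ordered binary tree whose inner nodes are all labelled by the binary function $J$ (join, exactly two ordered children) and whose leaves are labelled by elements of $T$. The complexity $C(X)$ is the number of nodes of $X$ (0 for the empty tree). The leaf list $l$ of $X$ is the sequence of leaf labels in an inorder traversal. WORDER: build a list $S$ by scanning $l$ from front to rear and appending a literal only if neither it nor its complement is already in $S$; WORDER$(X)=\sum_{i:\,x_i\in S} w_i$; here $x_i$ is expressed iff $x_i\in S$. WMAJORITY: WMAJORITY$(X)=\sum w_i$ over all $i$ such that $x_i$ occurs in $l$ at least once and at least as often as $\bar x_i$; these $x_i$ are the expressed variables. A tree is non-redundant if it is empty or if, with $k$ its number of expressed variables, its complexity is $2k-1$. MO-$F(X)=(F(X),C(X))$, $F$ maximized and $C$ minimized. Mutation (HVL-Prime applied $k$ times): each application chooses uniformly at random one of three operations. Substitute: replace a uniformly random leaf by a uniformly random $u\in T$. Insert: choose a uniformly random node $v$ and uniformly random $u\in T$, replace $v$ by a $J$-node with children $u$ and $v$ in uniformly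 random order (inserting into the empty tree yields the single leaf $u$). Delete: choose a uniformly random leaf $v$ with parent $p$ and sibling $u$, replace $p$ by $u$ (deleting $p$ and $v$; deleting the only leaf of a one-leaf tree yields the empty tree). Single-operation mutation uses $k=1$. (1+1) GP-single on MO-$F$: start with an initial tree $X$; in each iteration let $Y$ be $X$ mutated with $k=1$, and set $X:=Y$ iff $F(Y)>F(X)$, or $F(Y)=F(X)$ and $C(Y)\le C(X)$. *)

From HB Require Import structures.
From mathcomp Require Import all_boot all_order all_algebra.
Set Implicit Arguments. Unset Strict Implicit. Unset Printing Implicit Defensive.
Import Order.TTheory GRing.Theory Num.Theory.

(* Literals over variables 'I_n : (i, true) is x_i, (i, false) is its complement. *)
Definition lit (n : nat) := ('I_n * bool)%type.
Definition compl n (a : lit n) : lit n := (a.1, ~~ a.2).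
Definition poslit n (i : 'I_n) : lit n := (i, true).
Definition neglit n (i : 'I_n) : lit n := (i, false).

(* Non-empty syntax trees: leaves labelled by terminals, inner nodes are J. *)
Inductive ntree (A : Type) :=
| Leaf of A
| Node of ntree A & ntree A.
Arguments Leaf {A}.
Arguments Node {A}.

Definition tree (n : nat) := option (ntree (lit n)).

Fixpoint nsize A (t : ntree A) : nat :=
  match t with Leaf _ => 1 | Node l r => (nsize l + nsize r).+1 end.
Fixpoint nleaves A (t : ntree A) : seq A :=
  match t with Leaf a => [:: a] | Node l r => nleaves l ++ nleaves r end.

Definition complexity n (X : tree n) : nat :=
  if X is Some t then nsize t else 0.
Definition leaves n (X : tree n) : seq (lit n) :=
  if X is Some t then nleaves t else [::].
Definition nb_leaves n (X : tree n) : nat := size (leaves X).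

Fixpoint worder_scan n (S l : seq (lit n)) : seq (lit n) :=
  match l with
  | [::] => S
  | a :: l' => if (a \in S) || (compl a \in S) then worder_scan S l'
               else worder_scan (rcons S a) l'
  end.

Inductive fitness_kind := WORDER | WMAJORITY.

Definition expressed n (F : fitness_kind) (X : tree n) (i : 'I_n) : bool :=
  match F with
  | WORDER => poslit i \in worder_scan [::] (leaves X)
  | WMAJORITY => (0 < count_mem (poslit i) (leaves X)) &&
                 (count_mem (neglit i) (leaves X) <= count_mem (poslit i) (leaves X))
  end.

Definition fitness (R : realFieldType) n (w : 'I_n -> R) (F : fitness_kind)
  (X : tree n) : R := \sum_(i < n | expressed F X i) w i.

Definition nb_expressed n (F : fitness_kind) (X : tree n) : nat :=
  #|[pred i | expressed F X i]|.

Definition non_redundant n (F : fitness_kind) (X : tree n) : Prop :=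
  X = None \/ complexity X = 2 * nb_expressed F X - 1.

(* One application of HVL-Prime: all possible outcomes. *)
Inductive nsubst A : ntree A -> ntree A -> Prop :=
| sub_leaf a u : nsubst (Leaf a) (Leaf u)
| sub_l l l' r : nsubst l l' -> nsubst (Node l r) (Node l' r)
| sub_r l r r' : nsubst r r' -> nsubst (Node l r) (Node l r').

Inductive ninsert A : ntree A -> ntree A -> Prop :=
| ins_here_l u v : ninsert v (Node (Leaf u) v)
| ins_here_r u v : ninsert v (Node v (Leaf u))
| ins_l l l' r : ninsert l l' -> ninsert (Node l r) (Node l' r)
| ins_r l r r' : ninsert r r' -> ninsert (Node l r) (Node l r').

Inductive ndelete A : ntree A -> ntree A -> Prop :=
| del_here_l a u : ndelete (Node (Leaf a) u) u
| del_here_r a u : ndelete (Node u (Leaf a)) u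
| del_l l l' r : ndelete l l' -> ndelete (Node l r) (Node l' r)
| del_r l r r' : ndelete r r' -> ndelete (Node l r) (Node l r').

Inductive mutation1 n : tree n -> tree n -> Prop :=
| mut_subst t t' : nsubst t t' -> mutation1 (Some t) (Some t')
| mut_subst_empty : mutation1 None None
| mut_insert t t' : ninsert t t' -> mutation1 (Some t) (Some t')
| mut_insert_empty u : mutation1 None (Some (Leaf u))
| mut_delete t t' : ndelete t t' -> mutation1 (Some t) (Some t')
| mut_delete_single a : mutation1 (Some (Leaf a)) None
| mut_delete_empty : mutation1 None None.

Definition accept (R : realFieldType) n (w : 'I_n -> R) F (X Y : tree n) : bool :=
  ((fitness w F X < fitness w F Y)%R) ||
  ((fitness w F Y == fitness w F X) && (complexity Y <= complexity X)%N).

Definition gp_step (R : realFieldType) n (w : 'I_n -> R) F (X X' : tree n) : Prop :=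
  exists Y, mutation1 X Y /\ X' = (if accept w F X Y then Y else X).

From HB Require Import structures.
From mathcomp Require Import all_boot all_order all_algebra.
From mathcomp Require Import zify lra.
Import Order.TTheory GRing.Theory Num.Theory.
Set Implicit Arguments. Unset Strict Implicit.

(* Both fitness functions are LOCAL: whether x_i is expressed
   only depends on the literals of variable i in the leaf list, so adding or
   removing a leaf labelled by a literal of variable j changes the
   expressedness of j alone.  A single HVL-Prime operation edits the leaf
   list at one position (substitute), adds one leaf (insert) or removes one
   (delete).  Hence the set of expressed variables changes at most at one
   variable (insert, delete) or two (substitute), and, the weights being
   positive, an accepted offspring can only lose an expressed variable if it
   also loses a leaf:
   - substitute: the leaf count is unchanged and F does not decrease, so the
     number k of expressed variables does not decrease;
   - insert: the complexity grows, so F must grow strictly, forcing k + 1;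
   - delete: one leaf is lost and k drops by at most one.
   So s - k never increases.  Finally, since C = 2s - 1 and k <= s, a tree
   is non-redundant iff s <= k, a property preserved by the step invariant. *)

Definition expressedL n (F : fitness_kind) (l : seq (lit n)) (i : 'I_n) : bool :=
  match F with
  | WORDER => poslit i \in worder_scan [::] l
  | WMAJORITY => (0 < count_mem (poslit i) l) &&
                 (count_mem (neglit i) l <= count_mem (poslit i) l)
  end.

Lemma fitness_leaves (R : realFieldType) n (w : 'I_n -> R) F (X : tree n) :
  fitness w F X = (\sum_(i | expressedL F (leaves X) i) w i)%R.
Proof. by []. Qed.

Lemma nb_expressed_leaves n F (X : tree n) :
  nb_expressed F X = #|[pred i | expressedL F (leaves X) i]|.
Proof. by []. Qed.

Lemma mem_or_compl n (a : lit n) S :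
  (a \in S) || (compl a \in S) = has (fun x => x.1 == a.1) S.
Proof.
elim: S => //= x S IH; rewrite !inE -IH.
have -> : (x.1 == a.1) = (a == x) || (compl a == x).
  case: a x {IH} => [i b] [j c]; rewrite /compl /= !xpair_eqE eq_sym.
  by case: b; case: c; rewrite ?andbT ?andbF ?orbF.
by rewrite orbACA.
Qed.

Lemma worder_scanP n (i : 'I_n) l S : (poslit i \in worder_scan S l) =
  (poslit i \in S) || (~~ has (fun x => x.1 == i) S &&
     (ohead [seq a <- l | a.1 == i] == Some (poslit i))).
Proof.
elim: l S => [|a l IH] S /=; first by rewrite andbF orbF.
rewrite mem_or_compl; case: ifP => Ha; rewrite IH.
  by case: (eqVneq a.1 i) => [ai|//]; rewrite -ai Ha.
rewrite mem_rcons inE has_rcons.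
case: (eqVneq a.1 i) => [ai|ai]; last first.
  have -> // : (poslit i == a) = false.
  by apply: contraNF ai => /eqP <-.
have iS : poslit i \in S = false.
  by apply: contraFF Ha => iS; apply/hasP; exists (poslit i); rewrite // ai.
by subst i; rewrite iS Ha /= !orbF eq_sym.
Qed.

Lemma expressedL_insert_other n F l1 l2 (u : lit n) i : i != u.1 ->
  expressedL F (l1 ++ u :: l2) i = expressedL F (l1 ++ l2) i.
Proof.
rewrite eq_sym => ui; case: F => /=.
  by rewrite !worder_scanP /= !filter_cat /= (negbTE ui).
have upos : (u == poslit i) = false by apply: contraNF ui => /eqP ->.
have uneg : (u == neglit i) = false by apply: contraNF ui => /eqP ->.
by rewrite !count_cat /= upos uneg.
Qed.

Lemma expressedL_mem n F (l : seq (lit n)) i : expressedL F l i -> poslit i \in l.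
Proof.
case: F => /=; last by case/andP => pos _; rewrite -has_pred1 has_count.
rewrite worder_scanP /= => /eqP first_i.
have : poslit i \in [seq a <- l | a.1 == i].
  by move: first_i; case: [seq a <- l | a.1 == i] => //= x s [->]; rewrite mem_head.
by rewrite mem_filter => /andP [].
Qed.

Lemma card_expressedL_le n F (l : seq (lit n)) :
  (#|[pred i | expressedL F l i]| <= size l)%N.
Proof.
rewrite -(@card_image _ _ (@poslit n)); last by move=> i j [].
apply: leq_trans (card_size l); apply: subset_leq_card.
by apply/subsetP => x /imageP [i Ei ->]; apply: (@expressedL_mem _ F).
Qed.

Lemma card_update (T : finType) (P P' : pred T) a :
  (forall i, i != a -> P i = P' i) ->
  (#|[pred i | P' i]| + P a = #|[pred i | P i]| + P' a)%N.
Proof.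
move=> PP'; rewrite (cardD1 a) [in RHS](cardD1 a) !inE.
have -> : #|[predD1 [pred i | P' i] & a]| = #|[predD1 [pred i | P i] & a]|.
  by apply: eq_card => i; rewrite !inE; case: eqVneq => //= /PP' ->.
by rewrite addnC addnA addnAC.
Qed.

Lemma card_update_ge (T : finType) (P P' : pred T) a :
  (forall i, i != a -> P i = P' i) ->
  (#|[pred i | P i]| <= #|[pred i | P' i]|.+1)%N.
Proof.
by move/card_update; case: (P a); case: (P' a) => /=; lia.
Qed.

Section Weights.
Variables (T : finType) (R : realFieldType) (w : T -> R).

Lemma sum_update (P P' : pred T) a :
  (forall i, i != a -> P i = P' i) ->
  (\sum_(i | P' i) w i = \sum_(i | P i) w i +
     ((if P' a then w a else 0) - (if P a then w a else 0)))%R.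
Proof.
move=> PP'; rewrite (big_mkcond P) (big_mkcond P') /= (bigD1 a) //= [in RHS](bigD1 a) //=.
rewrite (eq_bigr (fun i => if P i then w i else 0)%R) /=; last by move=> i /PP' ->.
lra.
Qed.

Hypothesis w_pos : forall i, (0 < w i)%R.

Lemma card_update_gt (P P' : pred T) a :
  (forall i, i != a -> P i = P' i) ->
  (\sum_(i | P i) w i < \sum_(i | P' i) w i)%R ->
  (#|[pred i | P i]| < #|[pred i | P' i]|)%N.
Proof.
move=> PP'; rewrite (sum_update PP'); have card_eq := card_update PP'; have := w_pos a.
case: (P a) card_eq; case: (P' a) => /= card_eq wa; try lia;
  move=> lt; exfalso; move: lt; apply/negP; rewrite -leNgt; lra.
Qed.

Lemma card_update2_mono (P P' : pred T) a b :
  (forall i, i != a -> i != b -> P i = P' i) ->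
  (\sum_(i | P i) w i <= \sum_(i | P' i) w i)%R ->
  (#|[pred i | P i]| <= #|[pred i | P' i]|)%N.
Proof.
move=> PP'; pose Q := [pred i | if i == b then P' i else P i].
have PQ : forall i, i != b -> P i = Q i by move=> i /negbTE ib; rewrite /Q /= ib.
have QP' : forall i, i != a -> Q i = P' i.
  by move=> i ia; rewrite /Q /=; case: eqVneq => // ib; apply: PP'.
have Qb : Q b = P' b by rewrite /Q /= eqxx.
rewrite (sum_update QP') (sum_update PQ).
have card_PQ := card_update PQ; have card_QP' := card_update QP'.
have wa := w_pos a; have wb := w_pos b; move: card_PQ card_QP'; rewrite Qb.
case: (P b); case: (P' b); case: (Q a); case: (P' a) => /= card_PQ card_QP'; try lia;
  move=> le; exfalso; move: le; apply/negP; rewrite -ltNge; lra.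
Qed.

End Weights.

Lemma nsize_nleaves A (t : ntree A) : (nsize t = (2 * size (nleaves t)).-1)%N.
Proof.
have pos : forall u : ntree A, (0 < size (nleaves u))%N.
  by elim=> [//|l IHl r IHr] /=; rewrite size_cat; lia.
elim: t => [//|l IHl r IHr] /=; rewrite size_cat IHl IHr.
by have := pos l; have := pos r; lia.
Qed.

Lemma complexity_nb_leaves n (X : tree n) :
  complexity X = (2 * nb_leaves X).-1.
Proof. by case: X => [t|//]; apply: nsize_nleaves. Qed.

Lemma nb_leaves_pos n (t : ntree (lit n)) : (0 < nb_leaves (Some t))%N.
Proof. by elim: t => [//|l IHl r IHr]; rewrite /nb_leaves /= size_cat addn_gt0 IHl. Qed.

Lemma nsubst_nleaves A (t t' : ntree A) : nsubst t t' ->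
  exists l1 l2 a u, nleaves t = l1 ++ a :: l2 /\ nleaves t' = l1 ++ u :: l2.
Proof.
elim=> [a u|l l' r _ [l1 [l2 [a [u [E E']]]]]|l r r' _ [l1 [l2 [a [u [E E']]]]]].
- by exists [::], [::], a, u.
- by exists l1, (l2 ++ nleaves r), a, u; rewrite /= E E' -!catA.
- by exists (nleaves l ++ l1), l2, a, u; rewrite /= E E' -!catA.
Qed.

Lemma ninsert_nleaves A (t t' : ntree A) : ninsert t t' ->
  exists l1 l2 u, nleaves t = l1 ++ l2 /\ nleaves t' = l1 ++ u :: l2.
Proof.
elim=> [u v|u v|l l' r _ [l1 [l2 [u [E E']]]]|l r r' _ [l1 [l2 [u [E E']]]]].
- by exists [::], (nleaves v), u.
- by exists (nleaves v), [::], u; rewrite /= cats0.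
- by exists l1, (l2 ++ nleaves r), u; rewrite /= E E' -!catA.
- by exists (nleaves l ++ l1), l2, u; rewrite /= E E' -!catA.
Qed.

Lemma ndelete_ninsert A (t t' : ntree A) : ndelete t t' -> ninsert t' t.
Proof. by elim=> *; constructor. Qed.

Variant leaf_edit n (lX lY : seq (lit n)) : Prop :=
| EditNone of lY = lX
| EditSubst l1 l2 a u of lX = l1 ++ a :: l2 & lY = l1 ++ u :: l2
| EditInsert l1 l2 u of lX = l1 ++ l2 & lY = l1 ++ u :: l2
| EditDelete l1 l2 u of lX = l1 ++ u :: l2 & lY = l1 ++ l2.

Lemma mutation1_leaf_edit n (X Y : tree n) :
  mutation1 X Y -> leaf_edit (leaves X) (leaves Y).
Proof.
case=> [t t' /nsubst_nleaves [l1 [l2 [a [u [E E']]]]]||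
        t t' /ninsert_nleaves [l1 [l2 [u [E E']]]]| u|
        t t' /ndelete_ninsert/ninsert_nleaves [l1 [l2 [u [E E']]]]| a|].
- exact: EditSubst E E'.
- exact: EditNone.
- exact: EditInsert E E'.
- exact: (@EditInsert _ _ _ [::] [::] u).
- exact: EditDelete E' E.
- exact: (@EditDelete _ _ _ [::] [::] a).
- exact: EditNone.
Qed.

Lemma gp_step_mono (R : realFieldType) n (w : 'I_n -> R)
  (w_pos : forall i : 'I_n, (0 < w i)%R) F (X X' : tree n) :
  gp_step w F X X' ->
  (fitness w F X <= fitness w F X')%R /\
  (nb_leaves X' + nb_expressed F X <= nb_leaves X + nb_expressed F X')%N.
Proof.
case=> Y [mut ->]; case: ifP => acc; last by split.
have fit_le : (fitness w F X <= fitness w F Y)%R.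
  by case/orP: acc => [/ltW|/andP [/eqP -> _]].
split=> //; move: acc fit_le.
rewrite /accept !complexity_nb_leaves !nb_expressed_leaves !fitness_leaves /nb_leaves.
case: (mutation1_leaf_edit mut) => [->|l1 l2 a u -> ->|l1 l2 u -> ->|l1 l2 u -> ->] acc fit_le.
- by [].
- rewrite !size_cat /= leq_add2l; apply: (card_update2_mono w_pos (a := a.1) (b := u.1)) fit_le.
  by move=> i ia iu; rewrite !expressedL_insert_other.
- have fit_lt : (\sum_(i < n | expressedL F (l1 ++ l2) i) w i <
                 \sum_(i < n | expressedL F (l1 ++ u :: l2) i) w i)%R.
    case/orP: acc => [//|/andP [_]]; rewrite !size_cat /=; lia.
  have := card_update_gt w_pos (a := u.1) _ fit_lt.
  by move=> /(_ (fun i iu => esym (expressedL_insert_other F l1 l2 iu))); rewrite !size_cat /=; lia.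
- have := card_update_ge (a := u.1) (fun i iu => expressedL_insert_other F l1 l2 iu).
  by rewrite !size_cat /=; lia.
Qed.

(* Since C = 2s - 1 and k <= s, non-redundancy means s <= k; this is the
   form in which the step invariant propagates it. *)
Lemma non_redundantE n F (X : tree n) :
  non_redundant F X <-> (nb_leaves X <= nb_expressed F X)%N.
Proof.
have k_le_s : (nb_expressed F X <= nb_leaves X)%N by apply: card_expressedL_le.
rewrite /non_redundant complexity_nb_leaves.
case: X k_le_s => [t|] k_le_s; last by split=> [_|]; [rewrite /nb_leaves | left].
have s_pos := nb_leaves_pos t; split; first by case=> [//|]; lia.
by move=> s_le_k; right; lia.
Qed.

Local Open Scope ring_scope.

Theorem mainTheorem4 (R : realFieldType) (n : nat) (w : 'I_n -> R)
  (Hn : (1 <= n)%N)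
  (Hwpos : forall i : 'I_n, 0 < w i)
  (Hwmono : forall i j : 'I_n, (i <= j)%N -> w j <= w i)
  (F : fitness_kind) (run : nat -> tree n)
  (Hrun : forall t : nat, gp_step w F (run t) (run t.+1)) :
  (forall t : nat,
     fitness w F (run t) <= fitness w F (run t.+1) /\
     (nb_leaves (run t.+1) + nb_expressed F (run t)
        <= nb_leaves (run t) + nb_expressed F (run t.+1))%N) /\
  (forall t : nat, non_redundant F (run t) ->
     forall t' : nat, (t <= t')%N -> non_redundant F (run t')).
Proof.
have step t := gp_step_mono Hwpos (Hrun t).
split=> // t /non_redundantE nonred_t t'; elim: t' => [|t' IH].
  by rewrite leqn0 => /eqP <-; apply/non_redundantE.
rewrite leq_eqVlt => /orP [/eqP <-|lt_t]; first exact/non_redundantE.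
move/non_redundantE: (IH lt_t) => nonred_t'; apply/non_redundantE.
by have [_] := step t'; lia.
Qed.
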